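(* Let $G$ and $H$ be connected graphs of order at least two such that neither $G$ nor $H$ is a complete graph. If $\textnormal{diam}(G\diamond H)=2$, then $O_{\rm SR}(G\diamond H)=\mathcal{B}$.
   Context: All graphs are finite, simple and undirected; $\overline{X}$ denotes the complement of $X$; $\textnormal{diam}$ denotes diameter. The modular product $G\diamond H$ has vertex set $V(G)\times V(H)$, and $(g,h)$, $(g',h')$ are adjacent iff one of the following holds: ($g=g'$ and $hh'\in E(H)$), or ($h=h'$ and $gg'\in E(G)$), or ($gg'\in E(G)$ and $hh'\in E(H)$), or ($gg'\in E(\overline{G})$ and $hh'\in E(\overline{H})$). A set $S\subseteq V(X)$ is a strong resolving set of a connected graph $X$ if for all distinct $x,y\in V(X)$ there exists $z\in S$ such that $x$ lies on a $y$–$z$ geodesic or $y$ lies on an $x$–$z$ geodesic. The Maker–Breaker strong resolving game on $X$: Maker and Breaker alternately select a not-yet-chosen vertex of $X$; Maker wins if the vertices he selects contain a strong resolving set of $X$, Breaker wins otherwise. In the M-game Maker moves first, in the B-game Breaker moves first. $O_{\rm SR}(X)=\mathcal{M}$ if Maker has a winning strategy in both games, $\mathcal{B}$ if Breaker has a winning strategy in both, and $\mathcal{N}$ if the first player has a winning strategy in each. *)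

From mathcomp Require Import all_boot.
Set Implicit Arguments. Unset Strict Implicit. Unset Printing Implicit Defensive.

Definition simple_graph (V : finType) (e : rel V) : Prop :=
  symmetric e /\ irreflexive e.

Definition connected_graph (V : finType) (e : rel V) : Prop :=
  forall x y : V, connect e x y.

Definition complete_graph (V : finType) (e : rel V) : Prop :=
  forall x y : V, x != y -> e x y.

Definition nball (V : finType) (e : rel V) (x : V) (k : nat) : {set V} :=
  iter k (fun S : {set V} => S :|: [set y | [exists z in S, e z y]]) [set x].

(* Graph distance: least k with y within k steps of x (for connected graphs
   this is < #|V|, so the search range iota 0 #|V| suffices). *)
Definition dist (V : finType) (e : rel V) (x y : V) : nat :=
  find (fun k => y \in nball e x k) (iota 0 #|V|).

Definition diam (V : finType) (e : rel V) : nat :=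
  \max_(p : V * V) dist e p.1 p.2.

Definition modular_product (V W : finType) (eG : rel V) (eH : rel W)
  : rel (V * W) :=
  fun p q =>
    [|| (p.1 == q.1) && eH p.2 q.2,
        (p.2 == q.2) && eG p.1 q.1,
        eG p.1 q.1 && eH p.2 q.2
      | [&& p.1 != q.1, ~~ eG p.1 q.1, p.2 != q.2 & ~~ eH p.2 q.2]].

Definition on_geodesic (V : finType) (e : rel V) (y x z : V) : Prop :=
  dist e y x + dist e x z = dist e y z.

Definition strong_resolving_set (V : finType) (e : rel V) (S : {set V}) : Prop :=
  forall x y : V, x != y ->
    exists2 z, z \in S & (on_geodesic e y x z \/ on_geodesic e x y z).

Definition contains_srs (V : finType) (e : rel V) (M : {set V}) : Prop :=
  exists2 S : {set V}, S \subset M & strong_resolving_set e S.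

(* The fuel n is
   at least the number of free vertices (#|V| suffices from the start). *)
Fixpoint maker_wins (V : finType) (e : rel V) (n : nat)
    (M B : {set V}) (maker_turn : bool) : Prop :=
  match n with
  | 0 => contains_srs e M
  | n'.+1 =>
    if ~: (M :|: B) == set0 then contains_srs e M
    else if maker_turn then
      exists2 v, v \in ~: (M :|: B) & maker_wins e n' (v |: M) B false
    else forall v, v \in ~: (M :|: B) -> maker_wins e n' M (v |: B) true
  end.

Fixpoint breaker_wins (V : finType) (e : rel V) (n : nat)
    (M B : {set V}) (maker_turn : bool) : Prop :=
  match n with
  | 0 => ~ contains_srs e M
  | n'.+1 =>
    if ~: (M :|: B) == set0 then ~ contains_srs e M
    else if maker_turn then
      forall v, v \in ~: (M :|: B) -> breaker_wins e n' (v |: M) B false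
    else exists2 v, v \in ~: (M :|: B) & breaker_wins e n' M (v |: B) true
  end.

Definition breaker_wins_M_game (V : finType) (e : rel V) : Prop :=
  breaker_wins e #|V| set0 set0 true.
Definition breaker_wins_B_game (V : finType) (e : rel V) : Prop :=
  breaker_wins e #|V| set0 set0 false.

Definition outcome_SR_is_B (V : finType) (e : rel V) : Prop :=
  breaker_wins_M_game e /\ breaker_wins_B_game e.

From mathcomp Require Import all_boot zify.

(* If x and y are distinct and nonadjacent in a graph of diameter 2, their
   distance 2 is the diameter, so neither lies on a geodesic from the other to
   a third vertex: every strong resolving set contains x or y, and Breaker wins
   once he has claimed both.  Nonadjacent pairs g1 g2 of G and h1 h2 of H give
   the cycle (g1,h1), (g2,h1), (g2,h2), (g1,h2) of nonadjacent pairs in the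
   modular product.  Breaker claims a vertex of this cycle whose two cycle
   neighbours are still free, which is possible even after a first move of
   Maker; Maker can take only one of these neighbours, Breaker takes the other. *)

Set Implicit Arguments.
Unset Strict Implicit.
Unset Printing Implicit Defensive.

Section DiameterTwo.
Variables (T : finType) (e : rel T).

Definition nonadjacent (x y : T) : bool := [&& x != y, ~~ e x y & ~~ e y x].

Lemma nonadjacent_sym x y : nonadjacent x y = nonadjacent y x.
Proof. by rewrite /nonadjacent eq_sym [~~ e x y && _]andbC. Qed.

Lemma nonadjacent_neq x y : nonadjacent x y -> x != y.
Proof. by case/andP. Qed.

Lemma dist_le_diam x y : dist e x y <= diam e.
Proof. exact: (leq_bigmax (x, y)). Qed.

Lemma dist_gt0 x y : x != y -> 0 < dist e x y.
Proof.
move=> neq_xy; have : 0 < #|T| by apply/card_gt0P; exists x.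
rewrite /dist; case: #|T| => [|n] //= _.
by rewrite /nball /= in_set1 eq_sym (negbTE neq_xy).
Qed.

Lemma dist_gt1 x y : x != y -> ~~ e x y -> 1 < dist e x y.
Proof.
move=> neq_xy not_exy.
have : 1 < #|T| by apply/card_gt1P; exists x, y.
rewrite /dist; case: #|T| => [|[|n]] // _ /=.
rewrite /nball /= !inE eq_sym (negbTE neq_xy) /=.
case: existsP => // [[z /andP [/[!inE] /eqP -> exy]]].
by rewrite exy in not_exy.
Qed.

Hypothesis diam_le2 : diam e <= 2.

Lemma on_geodesic_far_end y x z :
  x != y -> ~~ e y x -> on_geodesic e y x z -> z = x.
Proof.
rewrite /on_geodesic => neq_xy not_eyx geo; apply/eqP; rewrite eq_sym.
apply: contraT => /dist_gt0 dist_xz_gt0.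
have neq_yx : y != x by rewrite eq_sym.
have := dist_gt1 neq_yx not_eyx.
have := dist_le_diam y z; lia.
Qed.

Lemma strong_resolving_set_nonadjacent S x y :
  nonadjacent x y -> strong_resolving_set e S -> (x \in S) || (y \in S).
Proof.
case/and3P=> neq_xy not_exy not_eyx /(_ x y neq_xy) [z zS [geo|geo]].
- by rewrite -(on_geodesic_far_end neq_xy not_eyx geo) zS.
- have neq_yx : y != x by rewrite eq_sym.
  by rewrite -(on_geodesic_far_end neq_yx not_exy geo) zS orbT.
Qed.

Lemma nonadjacent_not_contains_srs (M : {set T}) x y :
  nonadjacent x y -> x \notin M -> y \notin M -> ~ contains_srs e M.
Proof.
move=> nadj_xy xM yM [S /subsetP sub_SM /(strong_resolving_set_nonadjacent nadj_xy)].
by case/orP=> /sub_SM; rewrite ?(negbTE xM) ?(negbTE yM).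
Qed.

Lemma freeE (M B : {set T}) v : (v \in ~: (M :|: B)) = (v \notin M) && (v \notin B).
Proof. by rewrite !inE negb_or. Qed.

Lemma breaker_wins_claimed_pair x y (M B : {set T}) :
  nonadjacent x y -> x \notin M -> y \notin M -> x \in B -> y \in B ->
  forall n maker_turn, breaker_wins e n M B maker_turn.
Proof.
move=> nadj_xy + + + + n; elim: n M B => [|n IH] M B xM yM xB yB maker_turn /=.
  exact: nonadjacent_not_contains_srs nadj_xy xM yM.
case: ifP => [_|/negbT/set0Pn [w w_free]].
  exact: nonadjacent_not_contains_srs nadj_xy xM yM.
case: maker_turn.
- move=> v; rewrite freeE => /andP [_ vB].
  apply: IH; rewrite // in_setU1 negb_or ?xM ?yM andbT.
  + by apply: contraNneq vB => <-.
  + by apply: contraNneq vB => <-.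
- by exists w => //; apply: IH; rewrite // in_setU1 ?xB ?yB orbT.
Qed.

Lemma breaker_wins_double_threat v x y n (M B : {set T}) :
  v \notin M -> v \in B -> x \in ~: (M :|: B) -> y \in ~: (M :|: B) -> x != y ->
  nonadjacent v x -> nonadjacent v y -> 1 < n -> breaker_wins e n M B true.
Proof.
move=> vM vB x_free y_free neq_xy nadj_vx nadj_vy; case: n => [|[|n]] // _ /=.
rewrite ifN; last by apply/set0Pn; exists x.
move=> w w_free.
have [z z_free nadj_vz] :
    exists2 z, z \in ~: ((w |: M) :|: B) & nonadjacent v z.
  move: x_free y_free; rewrite !freeE.
  case: (eqVneq w x) => [-> | neq_wx] /andP [xM xB] /andP [yM yB].
  - by exists y; rewrite // freeE in_setU1 negb_or eq_sym neq_xy yM.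
  - by exists x; rewrite // freeE in_setU1 negb_or eq_sym neq_wx xM.
rewrite ifN; last by apply/set0Pn; exists z.
exists z => //; move: z_free w_free; rewrite !freeE => /andP [zM _] /andP [_ wB].
apply: (breaker_wins_claimed_pair nadj_vz) => //; rewrite ?in_setU1 ?eqxx ?vB ?orbT //.
by rewrite negb_or vM andbT; apply: contraNneq wB => <-.
Qed.

Lemma breaker_wins_claiming_double_threat v x y n (M B : {set T}) :
  v \in ~: (M :|: B) -> x \in ~: (M :|: B) -> y \in ~: (M :|: B) -> x != y ->
  nonadjacent v x -> nonadjacent v y -> 2 < n -> breaker_wins e n M B false.
Proof.
move=> v_free x_free y_free neq_xy nadj_vx nadj_vy; case: n => [|n] // n_gt1 /=.
rewrite ifN; last by apply/set0Pn; exists v.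
exists v => //; move: v_free; rewrite freeE => /andP [vM _].
have still_free z : nonadjacent v z -> z \in ~: (M :|: B) -> z \in ~: (M :|: (v |: B)).
  by case/and3P=> neq_vz _ _; rewrite !freeE in_setU1 negb_or eq_sym neq_vz.
apply: (breaker_wins_double_threat _ _ _ _ neq_xy nadj_vx nadj_vy n_gt1) => //.
- by rewrite in_setU1 eqxx.
- exact: still_free.
- exact: still_free.
Qed.

Section Square.
Variables a b c d : T.
Hypotheses (nadj_ab : nonadjacent a b) (nadj_bc : nonadjacent b c).
Hypotheses (nadj_cd : nonadjacent c d) (nadj_da : nonadjacent d a).
Hypotheses (neq_ac : a != c) (neq_bd : b != d).

Lemma card_square : 3 < #|T|.
Proof.
apply: (@leq_trans #|[:: a; b; c; d]|); last exact: max_card.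
rewrite (card_uniqP _) //=.
rewrite !inE !negb_or neq_ac neq_bd nonadjacent_neq // eq_sym nonadjacent_neq //.
by rewrite !nonadjacent_neq.
Qed.

Lemma breaker_wins_B_game_square : breaker_wins_B_game e.
Proof.
apply: (breaker_wins_claiming_double_threat _ _ _ neq_bd nadj_ab); rewrite ?inE //.
- by rewrite nonadjacent_sym.
- exact: ltnW card_square.
Qed.

Lemma breaker_wins_reply_off_diagonal u n :
  u != b -> u != d -> 2 < n -> breaker_wins e n [set u] set0 false.
Proof.
move=> neq_ub neq_ud n_gt2.
have [v [neq_uv nadj_vb nadj_vd]] :
    exists v, [/\ u != v, nonadjacent v b & nonadjacent v d].
  case: (eqVneq u a) => [->|neq_ua].
  - by exists c; split; rewrite // nonadjacent_sym.
  - by exists a; split; rewrite // nonadjacent_sym.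
by apply: (breaker_wins_claiming_double_threat _ _ _ neq_bd nadj_vb nadj_vd n_gt2);
  rewrite !inE ?orbF eq_sym.
Qed.

End Square.

Lemma breaker_wins_M_game_square a b c d :
  nonadjacent a b -> nonadjacent b c -> nonadjacent c d -> nonadjacent d a ->
  a != c -> b != d -> breaker_wins_M_game e.
Proof.
move=> nadj_ab nadj_bc nadj_cd nadj_da neq_ac neq_bd.
rewrite /breaker_wins_M_game.
have := card_square nadj_ab nadj_bc nadj_cd nadj_da neq_ac neq_bd.
case: #|T| => [|n] //= n_gt2.
rewrite ifN; last by apply/set0Pn; exists a; rewrite !inE.
move=> u _; rewrite setU0.
have reply :=
  breaker_wins_reply_off_diagonal nadj_ab nadj_bc nadj_cd nadj_da neq_ac neq_bd.
case: (boolP (u \in [set b; d])) => [|off_bd]; last first.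
  by move: off_bd; rewrite !inE negb_or => /andP [neq_ub neq_ud]; apply: reply.
(* Maker took b or d: reply as in the rotated square b c d a. *)
have neq_ca : c != a by rewrite eq_sym.
have reply_rot :=
  breaker_wins_reply_off_diagonal nadj_bc nadj_cd nadj_da nadj_ab neq_bd neq_ca.
rewrite !inE => /orP [] /eqP ->; apply: reply_rot => //;
  by rewrite ?[b == a]eq_sym ?[d == c]eq_sym nonadjacent_neq.
Qed.

Lemma outcome_SR_is_B_square a b c d :
  nonadjacent a b -> nonadjacent b c -> nonadjacent c d -> nonadjacent d a ->
  a != c -> b != d -> outcome_SR_is_B e.
Proof.
move=> nadj_ab nadj_bc nadj_cd nadj_da neq_ac neq_bd; split.
- exact: breaker_wins_M_game_square nadj_ab nadj_bc nadj_cd nadj_da neq_ac neq_bd.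
- exact: breaker_wins_B_game_square nadj_ab nadj_bc nadj_cd nadj_da neq_ac neq_bd.
Qed.

End DiameterTwo.

Lemma exists_nonadjacent (T : finType) (e : rel T) :
  symmetric e -> ~ complete_graph e -> exists x y, nonadjacent e x y.
Proof.
move=> sym_e not_complete.
case: (pickP (fun p : T * T => nonadjacent e p.1 p.2)) => [[x y] nadj|none].
  by exists x, y.
case: not_complete => x y neq_xy; have := none (x, y).
by rewrite /nonadjacent /= neq_xy (sym_e y x) andbb => /negbFE.
Qed.

Section ModularProduct.
Variables (V W : finType) (eG : rel V) (eH : rel W).

Lemma nonadjacent_modular_product_fst g1 g2 h :
  irreflexive eH -> nonadjacent eG g1 g2 ->
  nonadjacent (modular_product eG eH) (g1, h) (g2, h).
Proof.
move=> irrH /and3P [neq_g not_e12 not_e21].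
rewrite /nonadjacent /modular_product /= xpair_eqE eqxx irrH.
by rewrite (negbTE neq_g) (negbTE not_e12) (negbTE not_e21) !andbF.
Qed.

Lemma nonadjacent_modular_product_snd g h1 h2 :
  irreflexive eG -> nonadjacent eH h1 h2 ->
  nonadjacent (modular_product eG eH) (g, h1) (g, h2).
Proof.
move=> irrG /and3P [neq_h not_e12 not_e21].
rewrite /nonadjacent /modular_product /= xpair_eqE eqxx irrG.
by rewrite (negbTE neq_h) (negbTE not_e12) (negbTE not_e21) !andbF.
Qed.

End ModularProduct.

Theorem mainTheorem17 (V W : finType) (eG : rel V) (eH : rel W) :
  simple_graph eG -> simple_graph eH ->
  connected_graph eG -> connected_graph eH ->
  1 < #|V| -> 1 < #|W| ->
  ~ complete_graph eG -> ~ complete_graph eH ->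
  diam (modular_product eG eH) = 2 ->
  outcome_SR_is_B (modular_product eG eH).
Proof.
move=> [symG irrG] [symH irrH] _ _ _ _.
move=> /(exists_nonadjacent symG) [g1 [g2 nadj_g]].
move=> /(exists_nonadjacent symH) [h1 [h2 nadj_h]] diam2.
have nadj_g' := nadj_g; rewrite nonadjacent_sym in nadj_g'.
have nadj_h' := nadj_h; rewrite nonadjacent_sym in nadj_h'.
apply: (@outcome_SR_is_B_square _ _ _ (g1, h1) (g2, h1) (g2, h2) (g1, h2)).
- by rewrite diam2.
- exact: nonadjacent_modular_product_fst.
- exact: nonadjacent_modular_product_snd.
- exact: nonadjacent_modular_product_fst.
- exact: nonadjacent_modular_product_snd.
- by rewrite xpair_eqE negb_and (nonadjacent_neq nadj_g).
- by rewrite xpair_eqE negb_and (nonadjacent_neq nadj_g').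
Qed.
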